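(* Let $\Omega\subset\mathbb{R}^3$ be a bounded domain with $C^2$ boundary satisfying the uniform circumscribed sphere condition with radius $R$. Then $$|x-q^+(x,v)|\lesssim R\,N(x,v)$$ for all $v\in\mathbb{R}^3\setminus\{0\}$ and all $x\in\Gamma^-_v:=\{x\in\partial\Omega: n(x)\cdot v<0\}$, with an absolute implicit constant.
   Context: $n(x)$ is the outward unit normal at $x\in\partial\Omega$. $N(x,v)=-n(q(x,v))\cdot\frac{v}{|v|}$, where $q(x,v)=x-\tau_{x,v}v$ is the backward exit point; for $x\in\partial\Omega$ with $n(x)\cdot v<0$ this gives $q(x,v)=x$ and $N(x,v)=-n(x)\cdot v/|v|$. $q^+(x,v)$ denotes the point where the ray $\{x+sv:s>0\}$ leaves $\Omega$, i.e. the other endpoint of the chord of $\bar\Omega$ through $x$ in direction $v$. Uniform circumscribed sphere condition with radius $R$: every $x\in\partial\Omega$ lies on $\partial B_R$ for some ball $B_R$ of radius $R$ with $\bar\Omega\subset\bar B_R$. *)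

(* R^3 is 'rV[R]_3 (its library topology is the
   sup-norm one, which coincides with the Euclidean topology); Euclidean
   inner product and norm are defined explicitly below. *)
From HB Require Import structures.
From mathcomp Require Import all_boot all_order all_algebra.
From mathcomp Require Import all_classical all_reals all_analysis.
Set Implicit Arguments. Unset Strict Implicit. Unset Printing Implicit Defensive.
Import Order.TTheory GRing.Theory Num.Theory.
Import numFieldNormedType.Exports.
Local Open Scope classical_set_scope.
Local Open Scope ring_scope.

Section Defs.
Variable R : realType.
Local Notation V := 'rV[R]_3.

Definition edot (u w : V) : R := \sum_(i < 3) u 0 i * w 0 i.
Definition enorm (u : V) : R := Num.sqrt (edot u u).

Definition ebasis (i : 'I_3) : V := delta_mx 0 i.

Definition grad (f : V -> R) (x : V) : V := \row_(i < 3) ('d f x (ebasis i)).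

Definition C2 (f : V -> R) : Prop :=
  (forall x, differentiable f x) /\
  (forall i x, differentiable (fun y => 'd f y (ebasis i)) x) /\
  (forall i j, continuous (fun y => 'd (fun z => 'd f z (ebasis i)) y (ebasis j))).

Definition bdry (O : set V) : set V := closure O `\` O.

Definition bounded_domain (O : set V) : Prop :=
  open O /\ connected O /\ O !=set0 /\ exists M : R, forall y, O y -> enorm y <= M.

Definition C2_defining (O : set V) (xi : V -> R) : Prop :=
  C2 xi /\ O = [set y | xi y < 0] /\ (forall y, bdry O y -> grad xi y != 0).

Definition normal (xi : V -> R) (x : V) : V := (enorm (grad xi x))^-1 *: grad xi x.

Definition Nfun (xi : V -> R) (x v : V) : R := - (edot (normal xi x) v / enorm v).

(* forward exit point q^+(x,v) of the ray {x + s v : s > 0} from O *)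
Definition tplus (O : set V) (x v : V) : R :=
  sup [set s : R | 0 <= s /\ forall t : R, 0 < t < s -> O (x + t *: v)].
Definition qplus (O : set V) (x v : V) : V := x + tplus O x v *: v.

Definition circumscribed (O : set V) (Rad : R) : Prop :=
  forall x, bdry O x -> exists c : V,
    enorm (x - c) = Rad /\ forall y, closure O y -> enorm (y - c) <= Rad.

End Defs.

From HB Require Import structures.
From mathcomp Require Import all_boot all_order all_algebra.
From mathcomp Require Import all_classical all_reals all_analysis.
From mathcomp Require Import ring lra.
Import Order.TTheory GRing.Theory Num.Theory.
Import numFieldNormedType.Exports.
Local Open Scope classical_set_scope.
Local Open Scope ring_scope.

(* Let B be a circumscribed ball of center c through the boundary point x.
   Every ray from x pointing strictly out of B leaves the closure of Omega at
   once, so xi does not decrease along it; hence the gradient of xi at x is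
   nonnegative on an open half-space, which forces it to be a positive
   multiple of x - c, i.e. n(x) = (x - c) / R.  Moreover the ray x + t v stays
   in B only for t <= -2 (x - c).v / |v|^2, so
   |x - q^+(x,v)| = t^+ |v| <= -2 (x - c).v / |v| = 2 R N(x,v). *)

Section EuclideanDot.
Context {R : realType}.
Implicit Types (u w g : 'rV[R]_3) (a : R).

Lemma edotC u w : edot u w = edot w u.
Proof. by apply: eq_bigr => i _; rewrite mulrC. Qed.

Lemma edotDl u w g : edot (u + w) g = edot u g + edot w g.
Proof. by rewrite /edot -big_split; apply: eq_bigr => i _; rewrite mxE mulrDl. Qed.

Lemma edotZl a u w : edot (a *: u) w = a * edot u w.
Proof. by rewrite /edot mulr_sumr; apply: eq_bigr => i _; rewrite mxE mulrA. Qed.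

Lemma edotNl u w : edot (- u) w = - edot u w.
Proof. by rewrite -scaleN1r edotZl mulN1r. Qed.

Lemma edotDr u w g : edot g (u + w) = edot g u + edot g w.
Proof. by rewrite edotC edotDl !(edotC g). Qed.

Lemma edotZr a u w : edot w (a *: u) = a * edot w u.
Proof. by rewrite edotC edotZl edotC. Qed.

Lemma edotNr u w : edot w (- u) = - edot w u.
Proof. by rewrite edotC edotNl edotC. Qed.

Lemma edot_ge0 u : 0 <= edot u u.
Proof. by apply: sumr_ge0 => i _; rewrite -expr2 sqr_ge0. Qed.

Lemma edot_eq0 u : (edot u u == 0) = (u == 0).
Proof.
apply/eqP/eqP => [uu0|->]; last by rewrite /edot big1 // => i _; rewrite mxE mul0r.
apply/rowP => i; apply/eqP; rewrite mxE -sqrf_eq0 expr2; apply/eqP.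
by apply: (psumr_eq0P _ uu0) => // j _; rewrite -expr2 sqr_ge0.
Qed.

Lemma edot_gt0 u : (0 < edot u u) = (u != 0).
Proof. by rewrite lt_def edot_eq0 edot_ge0 andbT. Qed.

Lemma enorm_ge0 u : 0 <= enorm u.
Proof. exact: sqrtr_ge0. Qed.

Lemma enorm_sq u : enorm u ^+ 2 = edot u u.
Proof. by rewrite sqr_sqrtr // edot_ge0. Qed.

Lemma enormZ a u : enorm (a *: u) = `|a| * enorm u.
Proof. by rewrite /enorm edotZl edotZr mulrA -expr2 sqrtrM ?sqr_ge0 // sqrtr_sqr. Qed.

Lemma enorm_le u a : 0 <= a -> (enorm u <= a) = (edot u u <= a ^+ 2).
Proof. by move=> a0; rewrite -enorm_sq ler_pXn2r ?nnegrE ?enorm_ge0. Qed.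

Lemma edot_rayE u w a :
  edot (u + a *: w) (u + a *: w) = edot u u + a * (2 * edot u w + a * edot w w).
Proof. rewrite !(edotDl, edotDr, edotZl, edotZr) (edotC w u); ring. Qed.

Lemma grad_edot (f : 'rV[R]_3 -> R) (x w : 'rV[R]_3) : edot (grad f x) w = 'd f x w.
Proof.
rewrite /edot {2}(row_sum_delta w) linear_sum /=.
by apply: eq_bigr => i _; rewrite linearZ /= mxE mulrC.
Qed.

End EuclideanDot.

(* If g were not a multiple of u, the test vector w = -p + e u, with p the
   component of g orthogonal to u and e > 0 small, would give g.w < 0. *)
Lemma halfspace_ge0_colinear {R : realType} (g u : 'rV[R]_3) : u != 0 ->
  (forall w, 0 < edot w u -> 0 <= edot g w) ->
  g = (edot g u / edot u u) *: u.
Proof.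
move=> u0 gw_ge0.
have uu : 0 < edot u u by rewrite edot_gt0.
have gu : 0 <= edot g u by apply: gw_ge0.
set l := edot g u / edot u u; set p := g - l *: u.
have pu : edot p u = 0 by rewrite edotDl edotNl edotZl divfK ?subrr // gt_eqF.
have gp : edot g p = edot p p.
  by rewrite -{1}(subrK (l *: u) g) -/p edotDl edotZl (edotC u) pu mulr0 addr0.
suff /eqP : edot p p = 0 by rewrite edot_eq0 subr_eq0 => /eqP.
apply/eqP; rewrite eq_le edot_ge0 andbT leNgt; apply/negP => pp.
set e := edot p p / (2 * edot g u + 1).
have e0 : 0 < e by rewrite divr_gt0 //; lra.
have e_small : e * edot g u < edot p p.
  by rewrite /e mulrC mulrA ltr_pdivrMr; [nra | lra].
have := gw_ge0 (- p + e *: u).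
rewrite edotDl edotNl edotZl pu oppr0 add0r edotDr edotNr edotZr gp.
move=> /(_ (mulr_gt0 e0 uu)); lra.
Qed.

Lemma diff_ge0_of_min_along {R : realType} (f : 'rV[R]_3 -> R) (a w : 'rV[R]_3) :
  differentiable f a -> (forall t : R, 0 < t -> f a <= f (a + t *: w)) ->
  0 <= 'd f a w.
Proof.
move=> df fa_min.
have cv := @diff_derivable _ _ _ f a w df.
rewrite -deriveE // /derive (cvg_at_rightE _ _ cv).
apply: limr_ge.
  apply/cvg_ex; exists (lim ((fun h : R => h^-1 *: ((f \o shift a) (h *: w) - f a)) @ 0^')).
  move=> A /cv /nbhs_ballP [_ /posnumP[e] xe_A].
  by exists e%:num => //= y xe_y; rewrite lt_def => /andP [xney _]; apply: xe_A.
near=> h.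
have h0 : 0 < h by near: h; exact: nbhs_right_gt.
apply: mulr_ge0; first by rewrite invr_ge0 ltW.
by rewrite /= subr_ge0 addrC fa_min.
Unshelve. all: by end_near.
Qed.

Section BallRays.
Context {R : realType}.
Implicit Types (u w : 'rV[R]_3) (t : R).

Lemma ray_leaves_ball u w t : 0 < t -> 0 < edot w u ->
  edot u u < edot (u + t *: w) (u + t *: w).
Proof. rewrite edot_rayE (edotC u) => t0 wu; have := edot_ge0 w; nra. Qed.

Lemma ray_in_ball_le u w t : 0 < t -> w != 0 ->
  edot (u + t *: w) (u + t *: w) <= edot u u -> t <= - (2 * edot u w) / edot w w.
Proof.
rewrite -edot_gt0 edot_rayE => t0 ww; rewrite gerDl pmulr_rle0 // => h.
by rewrite ler_pdivlMr //; lra.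
Qed.

End BallRays.

Lemma tplus_le {R : realType} (O : set 'rV[R]_3) (x v : 'rV[R]_3) (L : R) :
  0 <= L -> (forall t, 0 < t -> O (x + t *: v) -> t <= L) ->
  0 <= tplus O x v <= L.
Proof.
move=> L0 OL; rewrite /tplus; set S := (X in sup X).
have S0 : S 0 by split => // t; lra.
have SL : ubound S L.
  move=> s [s0 Hs]; rewrite leNgt; apply/negP => Ls.
  have t0 : 0 < (L + s) / 2 by lra.
  have ts : 0 < (L + s) / 2 < s by apply/andP; split; lra.
  have := OL _ t0 (Hs _ ts); lra.
apply/andP; split; last by apply: ge_sup => //; exists 0.
by apply: sup_upper_bound => //; split; [exists 0 | exists L].
Qed.

Lemma enorm_sub_qplus {R : realType} (O : set 'rV[R]_3) (x v : 'rV[R]_3) :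
  0 <= tplus O x v -> enorm (x - qplus O x v) = tplus O x v * enorm v.
Proof.
move=> t0; rewrite /qplus opprD addrA subrr add0r -scaleNr enormZ.
by rewrite normrN ger0_norm.
Qed.

Lemma closure_sublevel_le0 {R : realType} (xi : 'rV[R]_3 -> R) : continuous xi ->
  closure [set y | xi y < 0] `<=` [set y | xi y <= 0].
Proof.
move=> xi_cont.
have /closure_id -> : closed [set y | xi y <= 0].
  apply: (@preimage_closed _ _ xi [set r | r <= 0]); last exact: closed_le.
  by move=> y _; apply: xi_cont.
by apply: closureS => y /ltW.
Qed.

Lemma normal_circumscribed {R : realType} (O : set 'rV[R]_3) (xi : 'rV[R]_3 -> R)
    (x c : 'rV[R]_3) (Rad : R) :
  (forall y, differentiable xi y) -> O = [set y | xi y < 0] -> grad xi x != 0 ->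
  0 < Rad -> closure O x -> enorm (x - c) = Rad ->
  (forall y, O y -> enorm (y - c) <= Rad) ->
  normal xi x = Rad^-1 *: (x - c).
Proof.
move=> dxi OE gx0 Rad0 clx xc ball; set u := x - c.
have u0 : u != 0 by rewrite -edot_gt0 -enorm_sq xc exprn_gt0.
have xi_x : xi x <= 0.
  by apply: (closure_sublevel_le0 _ (fun y => differentiable_continuous (dxi y))); rewrite -OE.
have grad_ge0 w : 0 < edot w u -> 0 <= edot (grad xi x) w.
  move=> wu; rewrite grad_edot; apply: diff_ge0_of_min_along => // t t0.
  rewrite (le_trans xi_x) // leNgt; apply/negP => xi_neg.
  have := ball (x + t *: w); rewrite OE => /(_ xi_neg).
  rewrite (enorm_le _ _ (ltW Rad0)).
  have -> : x + t *: w - c = u + t *: w by rewrite addrAC.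
  by rewrite -xc enorm_sq leNgt ray_leaves_ball.
have gE := halfspace_ge0_colinear _ _ u0 grad_ge0.
set l := _ / _ in gE.
have l0 : 0 < l.
  rewrite lt_def divr_ge0 ?edot_ge0 ?grad_ge0 ?edot_gt0 // andbT.
  by apply: contraNneq gx0 => l0; rewrite gE l0 scale0r.
rewrite /normal gE enormZ xc gtr0_norm // scalerA invfM mulrAC mulVf ?mul1r //.
by rewrite gt_eqF.
Qed.

Theorem proposition2p7 :
  exists C : nat, (0 < C)%N /\
  forall (R : realType) (O : set 'rV[R]_3) (xi : 'rV[R]_3 -> R) (Rad : R),
    bounded_domain O -> C2_defining O xi -> 0 < Rad -> circumscribed O Rad ->
    forall (v x : 'rV[R]_3), v != 0 ->
      bdry O x -> edot (normal xi x) v < 0 ->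
      enorm (x - qplus O x v) <= C%:R * Rad * Nfun xi x v.
Proof.
exists 2%N; split => // R O xi Rad _ [[dxi _] [OE gne]] Rad0 circ v x v0 bx nv.
have [c [xc ball]] := circ x bx.
have nE : normal xi x = Rad^-1 *: (x - c).
  by apply: normal_circumscribed (gne x bx) _ bx.1 xc _ => // y /subset_closure /ball.
have uv : edot (x - c) v < 0.
  by move: nv; rewrite nE edotZl pmulr_rlt0 // invr_gt0.
have vv : 0 < edot v v by rewrite edot_gt0.
have /andP [t0 tL] : 0 <= tplus O x v <= - (2 * edot (x - c) v) / edot v v.
  apply: tplus_le => [|t t0 Ot]; first by rewrite divr_ge0 //; lra.
  apply: ray_in_ball_le => //.
  rewrite -[edot (x - c) _]enorm_sq xc -(enorm_le _ _ (ltW Rad0)) addrAC.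
  by apply: ball; apply: subset_closure.
have nv0 : enorm v != 0 by rewrite -sqrf_eq0 enorm_sq edot_eq0.
have -> : 2%:R * Rad * Nfun xi x v = - (2 * edot (x - c) v) / edot v v * enorm v.
  by rewrite /Nfun nE edotZl -enorm_sq; field; rewrite nv0 gt_eqF.
by rewrite enorm_sub_qplus // ler_wpM2r ?enorm_ge0.
Qed.
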